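(* For every positive integer $t$ and every real $0<p\le1$, $$\sum_{i=1}^{t} i^p\le \frac{p}{p+1}\cdot\frac{t^p(t+1)^p}{(t+1)^p-t^p}.$$ *)

From Stdlib Require Import Reals.
Open Scope R_scope.

(* sum_{i=1}^{t} i^p, with real exponent via Rpower (bases are >= 1 > 0). *)
Definition powsum (p : R) (t : nat) : R :=
  sum_f_R0 (fun k => Rpower (INR (S k)) p) (Nat.pred t).

(* Write F(t) for the right-hand side.  The proof is by induction on t:
   F(1) >= 1 is the concavity (Bernoulli) inequality 2^p <= 1 + p, and the
   inductive step is the telescoping estimate F(t) + (t+1)^p <= F(t+1).
   Putting A = t^p, B = (t+1)^p, C = (t+2)^p we have F(t) = c B A/(B-A) and
   F(t+1) = c B (1 + B/(C-B)) with c = p/(p+1), so the step amounts to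
     B/(C-B) - A/(B-A) >= 1/p,
   i.e. to the monotonicity of  u |-> u^p/((u+1)^p - u^p) - u/p.  With
   s = ln((u+1)/u) this quantity equals  1/(e^{ps}-1) - 1/(p(e^s-1)),  which
   is nonincreasing in s > 0: its derivative has the sign of
   p sinh(s/2) - sinh(ps/2), and sinh(pz) <= p sinh z for z >= 0, 0 < p <= 1.
   All monotonicity facts are derived from the mean value theorem. *)

From Stdlib Require Import Reals Lra Lia.
From Coquelicot Require Import Coquelicot.
Open Scope R_scope.

Lemma nondecreasing_of_nonneg_derive (f df : R -> R) (a b : R) :
  a <= b ->
  (forall x, a <= x <= b -> is_derive f x (df x)) ->
  (forall x, a <= x <= b -> 0 <= df x) -> f a <= f b.
Proof.
  intros hab hder hpos.
  destruct (MVT_gen f a b df) as [c [hc hmvt]];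
    rewrite ?Rmin_left, ?Rmax_right in * by lra.
  - intros x hx; apply hder; lra.
  - intros x hx; apply continuity_pt_filterlim, (ex_derive_continuous f x).
    exists (df x); apply hder; lra.
  - assert (0 <= df c * (b - a)) by (apply Rmult_le_pos; [apply hpos|]; lra).
    lra.
Qed.

Lemma sinh_nonneg (x : R) : 0 <= x -> 0 <= sinh x.
Proof.
  intros hx; destruct (Req_dec x 0) as [-> | hne]; [rewrite sinh_0; lra|].
  rewrite <- sinh_0; left; apply sinh_lt; lra.
Qed.

Lemma cosh_le (a b : R) : 0 <= a <= b -> cosh a <= cosh b.
Proof.
  intros hab; apply (nondecreasing_of_nonneg_derive cosh sinh); try lra.
  - intros x _; apply is_derive_Reals, derivable_pt_lim_cosh.
  - intros x hx; apply sinh_nonneg; lra.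
Qed.

(* Subadditivity-type bound: sinh (p z) <= p sinh z for z >= 0 and 0 < p <= 1;
   the difference has derivative p (cosh z - cosh (p z)) >= 0. *)
Lemma sinh_scale_le (p z : R) : 0 < p <= 1 -> 0 <= z -> sinh (p * z) <= p * sinh z.
Proof.
  intros hp hz.
  set (k := fun x => p * sinh x - sinh (p * x)).
  assert (hk : k 0 <= k z).
  { apply (nondecreasing_of_nonneg_derive k (fun x => p * cosh x - p * cosh (p * x)));
      [lra| |].
    - intros x _; unfold k, sinh, cosh; auto_derive; [easy | field].
    - intros x hx; assert (cosh (p * x) <= cosh x) by (apply cosh_le; nra); nra. }
  unfold k in hk; rewrite Rmult_0_r, sinh_0 in hk; lra.
Qed.

Lemma exp_gt_1 (x : R) : 0 < x -> 1 < exp x.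
Proof. intros hx; rewrite <- exp_0; apply exp_increasing; lra. Qed.

(* e^x / (e^x - 1)^2 = 1 / (2 sinh (x/2))^2, the form in which the derivative
   of 1/(e^x - 1) is compared below. *)
Lemma exp_div_sqr_pred (x : R) :
  0 < x -> exp x / (exp x - 1) ^ 2 = / (2 * sinh (x / 2)) ^ 2.
Proof.
  intros hx.
  assert (hhalf : exp x = exp (x / 2) * exp (x / 2)) by (rewrite <- exp_plus; f_equal; field).
  assert (1 < exp (x / 2)) by (apply exp_gt_1; lra).
  unfold sinh; rewrite exp_Ropp, hhalf; field; split; nra.
Qed.

Definition recip_defect (p s : R) : R := / (exp (p * s) - 1) - / (p * (exp s - 1)).

Lemma recip_defect_antitone (p s1 s2 : R) :
  0 < p <= 1 -> 0 < s1 <= s2 -> recip_defect p s2 <= recip_defect p s1.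
Proof.
  intros hp hs.
  set (g := fun s => - recip_defect p s).
  set (dg := fun s => p * / (2 * sinh (p * s / 2)) ^ 2 - / p * / (2 * sinh (s / 2)) ^ 2).
  enough (g s1 <= g s2) by (unfold g in *; lra).
  apply (nondecreasing_of_nonneg_derive g dg); [lra| |].
  - intros x hx.
    assert (1 < exp (p * x)) by (apply exp_gt_1; nra).
    assert (1 < exp x) by (apply exp_gt_1; lra).
    unfold g, dg, recip_defect.
    rewrite <- (exp_div_sqr_pred (p * x)), <- (exp_div_sqr_pred x) by nra.
    auto_derive.
    + repeat split; try lra; apply Rmult_integral_contrapositive_currified; lra.
    + field; repeat split; lra.
  - intros x hx.
    assert (ha : 0 < sinh (p * x / 2)) by (rewrite <- sinh_0; apply sinh_lt; nra).
    assert (hb : 0 < sinh (x / 2)) by (rewrite <- sinh_0; apply sinh_lt; lra).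
    assert (hab : sinh (p * x / 2) <= p * sinh (x / 2)).
    { replace (p * x / 2) with (p * (x / 2)) by field; apply sinh_scale_le; lra. }
    set (a := sinh (p * x / 2)) in *; set (b := sinh (x / 2)) in *.
    assert (hsq : a ^ 2 <= (p * b) ^ 2) by (apply pow_incr; lra).
    unfold dg; fold a b.
    replace (p * / (2 * a) ^ 2 - / p * / (2 * b) ^ 2)
      with (((p * b) ^ 2 - a ^ 2) / (4 * p * a ^ 2 * b ^ 2)) by (field; lra).
    pose proof (pow_lt a 2 ha); pose proof (pow_lt b 2 hb).
    apply Rdiv_le_0_compat; [lra|].
    apply Rmult_lt_0_compat; [|lra]; apply Rmult_lt_0_compat; lra.
Qed.

Lemma Rpower_bernoulli (p u : R) : 0 < p <= 1 -> 0 <= u -> Rpower (1 + u) p <= 1 + p * u.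
Proof.
  intros hp hu.
  set (g := fun x => 1 + p * x - exp (p * ln (1 + x))).
  assert (hg : g 0 <= g u).
  { apply (nondecreasing_of_nonneg_derive g (fun x => p - p * / (1 + x) * exp (p * ln (1 + x))));
      [lra| |].
    - intros x hx; unfold g; auto_derive; [lra | field; lra].
    - intros x hx.
      assert (hln : 0 <= ln (1 + x)).
      { rewrite <- ln_1; destruct (Req_dec x 0) as [-> | hne].
        - rewrite Rplus_0_r; lra.
        - left; apply ln_increasing; lra. }
      assert (exp (p * ln (1 + x)) <= 1 + x).
      { rewrite <- (exp_ln (1 + x)) at 2 by lra.
        destruct (Req_dec (p * ln (1 + x)) (ln (1 + x))) as [-> | hne]; [lra|].
        left; apply exp_increasing; nra. }
      assert (/ (1 + x) * exp (p * ln (1 + x)) <= 1).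
      { apply (Rmult_le_reg_l (1 + x)); [lra|]; field_simplify; lra. }
      nra. }
  unfold g, Rpower in *; rewrite Rplus_0_r, ln_1, Rmult_0_r, exp_0 in hg; lra.
Qed.

Lemma Rpower_1_base (p : R) : Rpower 1 p = 1.
Proof. unfold Rpower; rewrite ln_1, Rmult_0_r; apply exp_0. Qed.

Definition sum_bound (p t : R) : R :=
  p / (p + 1) * (Rpower t p * Rpower (t + 1) p / (Rpower (t + 1) p - Rpower t p)).

Definition gap_term (p u : R) : R :=
  Rpower u p / (Rpower (u + 1) p - Rpower u p) - u / p.

Lemma gap_term_recip_defect (p u : R) :
  0 < p <= 1 -> 0 < u -> gap_term p u = recip_defect p (ln ((u + 1) / u)).
Proof.
  intros hp hu.
  assert (hr : 1 < (u + 1) / u) by (apply (Rmult_lt_reg_r u); [lra|]; field_simplify; lra).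
  assert (hlr : 0 < ln ((u + 1) / u)) by (rewrite <- ln_1; apply ln_increasing; lra).
  assert (hpow : exp (p * ln ((u + 1) / u)) = Rpower (u + 1) p / Rpower u p).
  { unfold Rpower; rewrite ln_div, Rmult_minus_distr_l, Rminus_def, exp_plus, exp_Ropp
      by lra; reflexivity. }
  assert (1 < exp (p * ln ((u + 1) / u))) by (apply exp_gt_1; nra).
  assert (0 < Rpower u p) by apply exp_pos.
  assert (Rpower u p < Rpower (u + 1) p) by (apply Rlt_Rpower_l; lra).
  unfold gap_term, recip_defect; rewrite exp_ln, hpow in * by lra.
  field; repeat split; lra.
Qed.

Lemma gap_term_le_succ (p u : R) : 0 < p <= 1 -> 0 < u -> gap_term p u <= gap_term p (u + 1).
Proof.
  intros hp hu.
  rewrite !gap_term_recip_defect by lra.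
  apply recip_defect_antitone; [lra|]; split.
  - rewrite <- ln_1; apply ln_increasing; [lra|].
    apply (Rmult_lt_reg_r (u + 1)); [lra|]; field_simplify; lra.
  - (* (u+2)/(u+1) <= (u+1)/u, i.e. u (u+2) <= (u+1)^2 *)
    left; apply ln_increasing; [apply Rdiv_lt_0_compat; lra|].
    apply (Rmult_lt_reg_r (u * (u + 1))); [nra|]; field_simplify; nra.
Qed.

Lemma sum_bound_one (p : R) : 0 < p <= 1 -> 1 <= sum_bound p 1.
Proof.
  intros hp.
  pose proof (Rpower_bernoulli p 1 hp ltac:(lra)) as hb.
  assert (hD : 1 < Rpower 2 p).
  { unfold Rpower; apply exp_gt_1, Rmult_lt_0_compat; [lra|].
    rewrite <- ln_1; apply ln_increasing; lra. }
  unfold sum_bound; replace (1 + 1) with 2 in * by ring.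
  rewrite Rpower_1_base, Rmult_1_l.
  set (D := Rpower 2 p) in *.
  replace (p / (p + 1) * (D / (D - 1)))
    with (1 + (p + 1 - D) / ((p + 1) * (D - 1))) by (field; lra).
  assert (0 <= (p + 1 - D) / ((p + 1) * (D - 1))).
  { apply Rmult_le_pos; [lra|]; left; apply Rinv_0_lt_compat; nra. }
  lra.
Qed.

Lemma sum_bound_step (p t : R) :
  0 < p <= 1 -> 0 < t -> sum_bound p t + Rpower (t + 1) p <= sum_bound p (t + 1).
Proof.
  intros hp ht.
  pose proof (gap_term_le_succ p t hp ht) as hgap.
  unfold sum_bound, gap_term in *.
  assert (hA : 0 < Rpower t p) by apply exp_pos.
  assert (hAB : Rpower t p < Rpower (t + 1) p) by (apply Rlt_Rpower_l; lra).
  assert (hBC : Rpower (t + 1) p < Rpower (t + 1 + 1) p) by (apply Rlt_Rpower_l; lra).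
  set (A := Rpower t p) in *; set (B := Rpower (t + 1) p) in *;
    set (C := Rpower (t + 1 + 1) p) in *.
  set (X := A / (B - A)) in *; set (Y := B / (C - B)) in *.
  (* the gap inequality reads Y - X >= 1/p *)
  assert (hYX : 0 <= p * (Y - X) - 1).
  { replace (p * (Y - X) - 1) with (p * ((Y - (t + 1) / p) - (X - t / p))) by (field; lra).
    apply Rmult_le_pos; lra. }
  replace (A * B / (B - A)) with (B * X) by (unfold X; field; lra).
  replace (B * C / (C - B)) with (B * (1 + Y)) by (unfold Y; field; lra).
  assert (hdiff : p / (p + 1) * (B * (1 + Y)) - (p / (p + 1) * (B * X) + B)
                 = B * (p * (Y - X) - 1) / (p + 1)) by (field; lra).
  assert (0 <= B * (p * (Y - X) - 1) / (p + 1)).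
  { apply Rmult_le_pos; [apply Rmult_le_pos|left; apply Rinv_0_lt_compat]; lra. }
  lra.
Qed.

Lemma powsum_succ (p : R) (k : nat) :
  powsum p (S (S k)) = powsum p (S k) + Rpower (INR (S k) + 1) p.
Proof. unfold powsum; simpl Nat.pred; rewrite <- S_INR; reflexivity. Qed.

Theorem lemma4p4 (t : nat) (p : R) (ht : (1 <= t)%nat) (hp0 : 0 < p) (hp1 : p <= 1) :
  powsum p t <=
  p / (p + 1) *
  (Rpower (INR t) p * Rpower (INR t + 1) p / (Rpower (INR t + 1) p - Rpower (INR t) p)).
Proof.
  fold (sum_bound p (INR t)).
  destruct t as [|k]; [lia|]; clear ht.
  induction k as [|k IH].
  - unfold powsum; simpl; rewrite Rpower_1_base.
    apply sum_bound_one; lra.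
  - rewrite powsum_succ, (S_INR (S k)).
    assert (0 < INR (S k)) by (apply lt_0_INR; lia).
    pose proof (sum_bound_step p (INR (S k)) ltac:(lra) ltac:(lra)).
    lra.
Qed.
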